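(* Let $f_1,\dots,f_n:\mathbb{R}^d\to\mathbb{R}$ be such that each $f_i$ is $L_i$-smooth and $\mu_i$-strongly convex with minimizer $x_i$. Let $\alpha_i\in(0,1)$, $T_i(x) = \alpha_i x+(1-\alpha_i)x_i$, $\tilde f(x) = \frac{1}{n}\sum_i f_i(T_i(x))$ with minimizer $x^*$, $L_\alpha = \frac{1}{n}\sum_i\alpha_i^2L_i$, $\mu_\alpha = \frac{1}{n}\sum_i\alpha_i^2\mu_i$. Let $\omega_i\geq0$ and $\beta_i\in(0,\frac{1}{\omega_i+1}]$. Consider DIANA applied to $\tilde f$: given $x^0, h_1^0,\dots,h_n^0\in\mathbb{R}^d$, for $k\geq0$ set $\Delta_i^k = \alpha_i\nabla f_i(T_i(x^k)) - h_i^k$, $\hat\Delta_i^k = \mathcal{C}_i^k(\Delta_i^k)$, $h_i^{k+1} = h_i^k + \beta_i\hat\Delta_i^k$, $g^k = \frac{1}{n}\sum_i(h_i^k + \hat\Delta_i^k)$, $x^{k+1} = x^k - \gamma g^k$, where $\mathcal{C}_i^k\in\mathbb{B}^d(\omega_i)$ are drawn independently across $i$ and $k$. Let $\sigma_k^2 = \frac{1}{n}\sum_i\omega_i\|h_i^k - \alpha_i\nabla f_i(T_i(x^* ))\|^2$ and $\mathcal{D}^k = \|x^k - x^*\|^2 + \frac{4}{n\min_i\beta_i}\gamma^2\sigma_k^2$. If \[ 0<\gamma\leq\left(L_\alpha + \frac{2\max_i\{L_i\alpha_i^2\omega_i\}}{n} + \frac{4\max_i\{\beta_i\omega_iL_i\alpha_i^2\}}{n\min_i\beta_i}\right)^{-1},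 \] then for all $k\geq0$, $\mathbb{E}[\mathcal{D}^k]\leq\max\left\{(1-\gamma\mu_\alpha)^k, \left(1 - \tfrac12\min_i\beta_i\right)^k\right\}\mathcal{D}^0$.
   Context: A (random) operator $\mathcal{C}$ belongs to $\mathbb{B}^d(\omega)$ if $\mathbb{E}[\mathcal{C}(x)] = x$ and $\mathbb{E}\|\mathcal{C}(x)-x\|^2\leq\omega\|x\|^2$ for all $x$. A differentiable $g$ is $L$-smooth if $\|\nabla g(x)-\nabla g(y)\|\leq L\|x-y\|$, and $\mu$-strongly convex if $g(x)\geq g(y)+\langle\nabla g(y),x-y\rangle+\frac{\mu}{2}\|x-y\|^2$, for all $x,y$. *)

From HB Require Import structures.
From mathcomp Require Import all_boot all_order all_algebra.
From mathcomp Require Import all_classical all_reals all_analysis.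
Set Implicit Arguments. Unset Strict Implicit. Unset Printing Implicit Defensive.
Import Order.TTheory GRing.Theory Num.Theory.
Import numFieldNormedType.Exports.
Local Open Scope classical_set_scope.
Local Open Scope ring_scope.

Section Defs.
Variable R : realType.

Definition dotv d (u v : 'rV[R]_d) : R := \sum_(j < d) u ord0 j * v ord0 j.
Definition enorm d (u : 'rV[R]_d) : R := Num.sqrt (dotv u u).

(* gradient: the row vector of partial derivatives, i.e. the Riesz
   representative of the (Frechet) differential 'd g x *)
Definition grad d (g : 'rV[R]_d -> R) (x : 'rV[R]_d) : 'rV[R]_d :=
  \row_(j < d) ('d g x (delta_mx ord0 j : 'rV[R]_d)).

Definition L_smooth d (g : 'rV[R]_d -> R) (L : R) :=
  (forall x, differentiable g x) /\
  forall x y, enorm (grad g x - grad g y) <= L * enorm (x - y).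

Definition strongly_convex d (g : 'rV[R]_d -> R) (mu : R) :=
  (forall x, differentiable g x) /\
  forall x y, g x >= g y + dotv (grad g y) (x - y) + mu / 2 * enorm (x - y) ^+ 2.

Definition is_minimizer d (g : 'rV[R]_d -> R) (x : 'rV[R]_d) :=
  forall y, g x <= g y.

(* A random operator C, realized on a probability space (Xi, P) as
   C : Xi -> R^d -> R^d, belongs to B^d(omega):
   E[C(x)] = x (componentwise, with integrable components) and
   E ||C(x) - x||^2 <= omega ||x||^2. *)
Definition in_B dXi (Xi : measurableType dXi) (P : probability Xi R) d
  (C : Xi -> 'rV[R]_d -> 'rV[R]_d) (omega : R) :=
  forall x : 'rV[R]_d,
    (forall j : 'I_d,
       P.-integrable setT (fun z => ((C z x) ord0 j)%:E) /\
       (\int[P]_z ((C z x) ord0 j)%:E = (x ord0 j)%:E)%E) /\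
    (\int[P]_z ((enorm (C z x - x)) ^+ 2)%:E <= (omega * enorm x ^+ 2)%:E)%E.

(* DIANA applied to ftilde, driven by a realization xi of all the draws:
   xi k i is the outcome used by compressor C_i^k. Returns (x^k, h^k). *)
Fixpoint diana n d dXi (Xi : measurableType dXi)
  (C : nat -> 'I_n -> Xi -> 'rV[R]_d -> 'rV[R]_d)
  (gradf : 'I_n -> 'rV[R]_d -> 'rV[R]_d) (alpha beta : 'I_n -> R)
  (xloc : 'I_n -> 'rV[R]_d) (gamma : R)
  (x0 : 'rV[R]_d) (h0 : 'I_n -> 'rV[R]_d) (xi : nat -> 'I_n -> Xi) (k : nat)
  : 'rV[R]_d * ('I_n -> 'rV[R]_d) :=
  match k with
  | 0%N => (x0, h0)
  | k'.+1 =>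
    let st := diana C gradf alpha beta xloc gamma x0 h0 xi k' in
    let x := st.1 in let h := st.2 in
    let Delta i := alpha i *: gradf i (alpha i *: x + (1 - alpha i) *: xloc i) - h i in
    let Dhat i := C k' i (xi k' i) (Delta i) in
    let g := n%:R^-1 *: \sum_(i < n) (h i + Dhat i) in
    (x - gamma *: g, fun i => h i + beta i *: Dhat i)
  end.

(* Expectation over independent draws: integrate successively (in the
   order of the list l) over the coordinates (k,i) of xi, the coordinate
   (k,i) being distributed according to P k i; since the coordinates are
   drawn from a product of the laws P k i, this is the expectation with
   respect to the product probability (i.e. independent draws). *)
Fixpoint iexp n dXi (Xi : measurableType dXi) (P : nat -> 'I_n -> probability Xi R)
  (l : seq (nat * 'I_n)) (F : (nat -> 'I_n -> Xi) -> \bar R)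
  (xi : nat -> 'I_n -> Xi) : \bar R :=
  match l with
  | [::] => F xi
  | (k, i) :: l' =>
      (\int[P k i]_z iexp P l' F
          (fun k0 i0 => if (k0 == k) && (i0 == i) then z else xi k0 i0))%E
  end.

(* E[F] where F depends only on the draws of iterations 0..K-1 *)
Definition expect_upto n dXi (Xi : measurableType dXi)
  (P : nat -> 'I_n -> probability Xi R) (K : nat)
  (F : (nat -> 'I_n -> Xi) -> \bar R) : \bar R :=
  iexp P [seq (k, i) | k <- iota 0 K, i <- enum 'I_n] F (fun _ _ => point).

End Defs.

From HB Require Import structures.
From mathcomp Require Import all_boot all_order all_algebra.
From mathcomp Require Import all_classical all_reals all_analysis.
From mathcomp Require Import ring lra.
From mathcomp Require Import measurable_realfun.
Set Implicit Arguments. Unset Strict Implicit. Unset Printing Implicit Defensive.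
Import Order.TTheory GRing.Theory Num.Theory.
Import numFieldNormedType.Exports.
Local Open Scope classical_set_scope.
Local Open Scope ring_scope.

(* The Lyapunov function D^k = |x^k - x_star|^2 + M sigma_k^2 contracts by the
   factor rho = max (1 - gamma mu_alpha) (1 - beta_min / 2) in conditional
   expectation.  As the compressors are unbiased with variance at most
   omega_i |.|^2 and independent, integrating out the n compressions of one
   iteration one after the other replaces each message by its mean, at the price
   of a variance term.  What is left is deterministic: the gradient step
   contracts |x - x_star|^2 by 1 - gamma mu_alpha up to a multiple of
   ftilde x - ftilde x_star; each shift h_i moves towards alpha_i grad f_i (T_i x),
   which contracts sigma^2 by 1 - beta_i; and cocoercivity of phi_i = f_i o T_i
   bounds every gradient difference by a Bregman divergence.  These divergences
   sum to n (ftilde x - ftilde x_star), and the step-size condition makes their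
   total coefficient nonpositive.  Iterating the one-step bound through the
   nested integrals gives rho^k D^0. *)

Section InnerProduct.
Variables (R : realType) (d : nat).
Implicit Types (a : R) (u v w : 'rV[R]_d).

Lemma dotvC u v : dotv u v = dotv v u.
Proof. by apply: eq_bigr => j _; rewrite mulrC. Qed.

Lemma dotvDl u v w : dotv (u + v) w = dotv u w + dotv v w.
Proof. by rewrite /dotv -big_split; apply: eq_bigr => j _; rewrite !mxE mulrDl. Qed.

Lemma dotvZl a u v : dotv (a *: u) v = a * dotv u v.
Proof. by rewrite /dotv mulr_sumr; apply: eq_bigr => j _; rewrite !mxE mulrA. Qed.

Lemma dotvNl u v : dotv (- u) v = - dotv u v.
Proof. by rewrite -scaleN1r dotvZl mulN1r. Qed.

Lemma dotvBl u v w : dotv (u - v) w = dotv u w - dotv v w.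
Proof. by rewrite dotvDl dotvNl. Qed.

Lemma dotvDr u v w : dotv u (v + w) = dotv u v + dotv u w.
Proof. by rewrite dotvC dotvDl !(dotvC u). Qed.

Lemma dotvZr a u v : dotv u (a *: v) = a * dotv u v.
Proof. by rewrite dotvC dotvZl dotvC. Qed.

Lemma dotvNr u v : dotv u (- v) = - dotv u v.
Proof. by rewrite dotvC dotvNl dotvC. Qed.

Lemma dotvBr u v w : dotv u (v - w) = dotv u v - dotv u w.
Proof. by rewrite dotvDr dotvNr. Qed.

Lemma dotv0l v : dotv 0 v = 0.
Proof. by rewrite /dotv big1 // => j _; rewrite mxE mul0r. Qed.

Lemma dotv0r v : dotv v 0 = 0.
Proof. by rewrite dotvC dotv0l. Qed.

Lemma dotv_suml n (F : 'I_n -> 'rV[R]_d) v :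
  dotv (\sum_(i < n) F i) v = \sum_(i < n) dotv (F i) v.
Proof. by elim/big_rec2: _ => [|i _ x _ <-]; rewrite ?dotv0l ?dotvDl. Qed.

Definition sqnorm v := dotv v v.

Lemma sqnorm_ge0 v : 0 <= sqnorm v.
Proof. by apply: sumr_ge0 => j _; rewrite -expr2 sqr_ge0. Qed.

Lemma sqnorm_eq0 v : (sqnorm v == 0) = (v == 0).
Proof.
apply/idP/eqP => [|->]; last by rewrite /sqnorm dotv0l.
rewrite psumr_eq0 => [/allP v0|j _]; last by rewrite -expr2 sqr_ge0.
apply/rowP => j; rewrite mxE.
by apply/eqP; rewrite -sqrf_eq0 expr2; exact: v0 (mem_index_enum j).
Qed.

Lemma enorm_sqr v : enorm v ^+ 2 = sqnorm v.
Proof. by rewrite sqr_sqrtr // sqnorm_ge0. Qed.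

Lemma enorm_ge0 v : 0 <= enorm v.
Proof. exact: sqrtr_ge0. Qed.

Lemma enorm_eq0 v : (enorm v == 0) = (v == 0).
Proof. by rewrite sqrtr_eq0 le_eqVlt ltNge sqnorm_ge0 orbF sqnorm_eq0. Qed.

Lemma enormZ a v : enorm (a *: v) = `|a| * enorm v.
Proof. by rewrite /enorm dotvZl dotvZr mulrA sqrtrM ?sqr_ge0 // sqrtr_sqr. Qed.

Lemma sqnormD u v : sqnorm (u + v) = sqnorm u + 2 * dotv u v + sqnorm v.
Proof. rewrite /sqnorm !dotvDl !dotvDr (dotvC v u); ring. Qed.

Lemma sqnormB u v : sqnorm (u - v) = sqnorm u - 2 * dotv u v + sqnorm v.
Proof. rewrite /sqnorm !dotvBl !dotvBr (dotvC v u); ring. Qed.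

Lemma sqnormZ a v : sqnorm (a *: v) = a ^+ 2 * sqnorm v.
Proof. by rewrite /sqnorm dotvZl dotvZr mulrA expr2. Qed.

Lemma sqnormN v : sqnorm (- v) = sqnorm v.
Proof. by rewrite /sqnorm dotvNl dotvNr opprK. Qed.

Lemma sqnormB_le u v : sqnorm (u - v) <= 2 * sqnorm u + 2 * sqnorm v.
Proof. have := sqnorm_ge0 (u + v); rewrite sqnormD sqnormB; lra. Qed.

Lemma cauchy_schwarz u v : dotv u v <= enorm u * enorm v.
Proof.
wlog [u_gt0 v_gt0] : u v / 0 < enorm u /\ 0 < enorm v.
  move=> wlog_uv; have [->|u_neq0] := eqVneq u 0.
    by rewrite dotv0l mulr_ge0 ?enorm_ge0.
  have [->|v_neq0] := eqVneq v 0; first by rewrite dotv0r mulr_ge0 ?enorm_ge0.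
  by apply: wlog_uv; rewrite !lt0r !enorm_eq0 u_neq0 v_neq0 !enorm_ge0.
set nu := enorm u; set nv := enorm v.
have := sqnorm_ge0 (nu^-1 *: u - nv^-1 *: v).
rewrite sqnormB !sqnormZ dotvZl dotvZr -!enorm_sqr -/nu -/nv !exprVn.
rewrite !mulVf ?expf_neq0 ?gt_eqF // => H.
have : nu^-1 * (nv^-1 * dotv u v) <= 1 by lra.
by rewrite mulrA -invfM ler_pdivrMl ?mulr_gt0 // mulr1.
Qed.

Lemma sqnorm_averaging_contraction u w b om :
  0 <= b -> 0 <= om -> b <= (om + 1)^-1 ->
  sqnorm (u + b *: (w - u)) + b ^+ 2 * om * sqnorm (w - u)
    <= (1 - b) * sqnorm u + b * sqnorm w.
Proof.
move=> b_ge0 om_ge0 b_le.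
have b2_le : b ^+ 2 * (om + 1) <= b.
  by rewrite expr2 -mulrA ler_piMr // -ler_pdivlMr ?mul1r //; lra.
have := ler_wpM2r (sqnorm_ge0 (w - u)) b2_le.
set D := w - u; have -> : w = u + D by rewrite /D addrC subrK.
rewrite sqnormD sqnormZ dotvZr sqnormD; nra.
Qed.

End InnerProduct.

Lemma sqnorm_rV0 (R : realType) (u : 'rV[R]_0) : sqnorm u = 0.
Proof. by rewrite /sqnorm /dotv big_ord0. Qed.

Lemma exprn_max_le (R : realDomainType) (x y : R) k :
  Order.max x y ^+ k <= Order.max (x ^+ k) (y ^+ k).
Proof. by rewrite /Order.max; case: ifP; rewrite le_max lexx ?orbT. Qed.

Section QuadraticBounds.
Variables (R : realType) (d : nat).
Local Notation V := 'rV[R]_d.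
Implicit Types (phi : V -> R) (G : V -> V) (x y z : V).

Definition quad_lower_bound phi G (mu : R) :=
  forall x y, phi x + dotv (G x) (y - x) + mu / 2 * sqnorm (y - x) <= phi y.

Definition quad_upper_bound phi G (L : R) :=
  forall x y, phi y <= phi x + dotv (G x) (y - x) + L / 2 * sqnorm (y - x).

Lemma diff_grad (f : V -> R) x v : 'd f x v = dotv (grad f x) v.
Proof.
rewrite {1}(row_sum_delta v) linear_sum /dotv; apply: eq_bigr => j _.
by rewrite linearZ /= /grad mxE mulrC.
Qed.

Lemma is_derive_line (f : V -> R) (x v : V) (t : R) : (forall y, differentiable f y) ->
  is_derive t 1 (fun s : R => f (s *: v + x)) (dotv (grad f (t *: v + x)) v).
Proof.
move=> df; pose p : R -> V := ( *:%R^~ v) + cst x.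
have dp s : is_diff s p (( *:%R^~ v) + 0) by apply: is_diffD.
have dfp : differentiable (f \o p) t.
  by apply: differentiable_comp; [exact: ex_diff | exact: df].
have -> : dotv (grad f (t *: v + x)) v = 'd (f \o p) t 1.
  rewrite diff_comp; [|exact: ex_diff|exact: df].
  by rewrite /= diff_val /= diff_grad !fctE scale1r addr0.
by rewrite -deriveE //; apply/derivableP/diff_derivable.
Qed.

Lemma strongly_convex_quad_lower (f : V -> R) mu :
  strongly_convex f mu -> quad_lower_bound f (grad f) mu.
Proof. by move=> [_ sc] x y; rewrite -enorm_sqr; exact: sc. Qed.

Lemma L_smooth_quad_upper (f : V -> R) L :
  L_smooth f L -> quad_upper_bound f (grad f) L.
Proof.
move=> [df lip] x y; set v := y - x.
set c1 := dotv (grad f x) v; set c2 := L / 2 * sqnorm v.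
(* MVT applied to [f (x + t v) - c1 t - c2 t^2] on [0, 1], whose derivative
   is [<= 0] by the Lipschitz bound on [grad f] *)
pose psi := (fun t => f (t *: v + x)) - c1 *: (@idfun R) - c2 *: (@idfun R) ^+ 2.
pose dpsi t := dotv (grad f (t *: v + x)) v - c1 *: (1 : R)
               - c2 *: ((2%:R * idfun t ^+ 1) *: (1 : R)).
have psi' t : is_derive t (1 : R) psi (dpsi t).
  have d1 := is_deriveZ c1 (@is_derive_id _ _ t 1).
  have d2 := is_deriveZ c2 (is_deriveX 2 (@is_derive_id _ _ t 1)).
  exact: is_deriveB (is_deriveB (is_derive_line x v t df) d1) d2.
have psi_cont : {within `[0, 1], continuous psi}.
  by apply: derivable_within_continuous => t _; exact: ex_derive.
have [c /andP[c_gt0 _]] := MVT ltr01 (fun t _ => psi' t) psi_cont.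
rewrite /psi /dpsi !fctE /= scale1r scale0r add0r /v subrK.
rewrite /GRing.scale /= !mulr1 !mulr0 expr1n expr0n /= mulr0 !subr0 expr1 => psi10.
have : dotv (grad f (c *: v + x)) v - c1 <= L * c * sqnorm v.
  rewrite /c1 -dotvBl; apply: le_trans (cauchy_schwarz _ _) _.
  rewrite -enorm_sqr expr2 mulrA ler_wpM2r ?enorm_ge0 //.
  by have := lip (c *: v + x) x; rewrite addrK enormZ gtr0_norm // mulrA.
have -> : L * c * sqnorm v = c2 * (2 * c) by rewrite /c2; field.
rewrite -/v in psi10; lra.
Qed.

Lemma quad_lower_boundW phi G mu mu' :
  mu' <= mu -> quad_lower_bound phi G mu -> quad_lower_bound phi G mu'.
Proof.
move=> le_mu lb x y; apply: le_trans (lb x y); rewrite lerD2l.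
by rewrite ler_wpM2r ?sqnorm_ge0 // ler_pM2r.
Qed.

Lemma quad_bounds_le phi G mu L : (0 < d)%N ->
  quad_lower_bound phi G mu -> quad_upper_bound phi G L -> mu <= L.
Proof.
move=> d_gt0 lb ub; pose u : V := const_mx 1.
have u_gt0 : 0 < sqnorm u.
  rewrite /sqnorm /dotv (eq_bigr (fun _ => 1)); last by move=> j _; rewrite mxE mulr1.
  by rewrite sumr_const card_ord ltr0n.
have := le_trans (lb 0 u) (ub 0 u).
by rewrite lerD2l subr0 ler_pM2r // ler_pM2r ?invr_gt0.
Qed.

Section AffineComposition.
Variables (a : R) (b : V).

Let quad_term_affine (c s : R) : c / 2 * (a ^+ 2 * s) = a ^+ 2 * c / 2 * s.
Proof. by ring. Qed.

Lemma quad_lower_bound_comp_affine phi G mu : quad_lower_bound phi G mu ->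
  quad_lower_bound (fun x => phi (a *: x + b)) (fun x => a *: G (a *: x + b))
    (a ^+ 2 * mu).
Proof.
move=> lb x y; have := lb (a *: x + b) (a *: y + b).
rewrite opprD addrACA subrr addr0 -scalerBr sqnormZ dotvZr dotvZl.
by rewrite quad_term_affine.
Qed.

Lemma quad_upper_bound_comp_affine phi G L : quad_upper_bound phi G L ->
  quad_upper_bound (fun x => phi (a *: x + b)) (fun x => a *: G (a *: x + b))
    (a ^+ 2 * L).
Proof.
move=> ub x y; have := ub (a *: x + b) (a *: y + b).
rewrite opprD addrACA subrr addr0 -scalerBr sqnormZ dotvZr dotvZl.
by rewrite quad_term_affine.
Qed.

End AffineComposition.

Section Average.
Variables (n : nat) (phi : 'I_n -> V -> R) (G : 'I_n -> V -> V) (m : 'I_n -> R).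

Let avg_phi x := n%:R^-1 * \sum_(i < n) phi i x.
Let avg_G x := n%:R^-1 *: \sum_(i < n) G i x.
Let avg_m := n%:R^-1 * \sum_(i < n) m i.

Let avg_quad_expansion x y :
  n%:R^-1 * \sum_(i < n) (phi i x + dotv (G i x) (y - x) + m i / 2 * sqnorm (y - x))
  = avg_phi x + dotv (avg_G x) (y - x) + avg_m / 2 * sqnorm (y - x).
Proof.
rewrite !big_split /= -!mulr_suml /avg_G dotvZl dotv_suml.
by rewrite /avg_phi /avg_m !mulrDr !mulrA.
Qed.

Lemma quad_lower_bound_avg : (forall i, quad_lower_bound (phi i) (G i) (m i)) ->
  quad_lower_bound avg_phi avg_G avg_m.
Proof.
move=> lb x y; rewrite -avg_quad_expansion ler_wpM2l ?invr_ge0 ?ler0n //.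
by apply: ler_sum => i _; exact: lb.
Qed.

Lemma quad_upper_bound_avg : (forall i, quad_upper_bound (phi i) (G i) (m i)) ->
  quad_upper_bound avg_phi avg_G avg_m.
Proof.
move=> ub x y; rewrite -avg_quad_expansion ler_wpM2l ?invr_ge0 ?ler0n //.
by apply: ler_sum => i _; exact: ub.
Qed.

End Average.

Section SmoothConvex.
Variables (phi : V -> R) (G : V -> V) (mu L : R).
Hypotheses (mu_ge0 : 0 <= mu) (L_gt0 : 0 < L).
Hypotheses (lb : quad_lower_bound phi G mu) (ub : quad_upper_bound phi G L).

(* compare [phi] at [y - L^-1 (G y - G z)] with both bounds *)
Lemma cocoercive y z :
  sqnorm (G y - G z) <= 2 * L * (phi y - phi z - dotv (G z) (y - z)).
Proof.
set v := G y - G z; set u := y - L^-1 *: v.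
have uyE : u - y = - (L^-1 *: v) by rewrite /u addrAC subrr add0r.
have uzE : u - z = (y - z) - L^-1 *: v by rewrite /u addrAC.
have := quad_lower_boundW mu_ge0 lb z u; have := ub y u.
rewrite uyE uzE sqnormN sqnormZ dotvNr dotvZr mul0r mul0r addr0 => ub_u lb_u.
rewrite (dotvBr _ (y - z)) dotvZr in lb_u.
have quadE : L / 2 * (L^-1 ^+ 2 * sqnorm v) = L^-1 * sqnorm v / 2.
  by field; rewrite gt_eqF.
have vE : L^-1 * dotv (G y) v - L^-1 * dotv (G z) v = L^-1 * sqnorm v.
  by rewrite -mulrBr -dotvBl.
rewrite quadE in ub_u.
have key : L^-1 * sqnorm v / 2 <= phi y - phi z - dotv (G z) (y - z) by lra.
have -> : sqnorm v = 2 * L * (L^-1 * sqnorm v / 2) by field; rewrite gt_eqF.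
by apply: ler_wpM2l key; rewrite mulr_ge0 ?ltW.
Qed.

Lemma minimizer_grad_eq0 xs : is_minimizer phi xs -> G xs = 0.
Proof.
move=> xs_min; apply/eqP; rewrite -sqnorm_eq0 eq_le sqnorm_ge0 andbT.
set y := xs - L^-1 *: G xs.
have ey : y - xs = - (L^-1 *: G xs) by rewrite /y addrAC subrr add0r.
have := le_trans (xs_min y) (ub xs y).
rewrite ey sqnormN sqnormZ dotvNr dotvZr.
have -> : L / 2 * (L^-1 ^+ 2 * sqnorm (G xs)) = L^-1 / 2 * sqnorm (G xs).
  by field; rewrite gt_eqF.
rewrite -/(sqnorm _) => h.
have : L^-1 / 2 * sqnorm (G xs) <= 0 by lra.
by rewrite pmulr_rle0 // divr_gt0 ?invr_gt0.
Qed.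

Lemma gradient_step_sqnorm_le xs gamma y : is_minimizer phi xs -> 0 <= gamma ->
  sqnorm (y - xs - gamma *: G y)
    <= (1 - gamma * mu) * sqnorm (y - xs)
       - 2 * gamma * (1 - gamma * L) * (phi y - phi xs).
Proof.
move=> xs_min gamma_ge0; have Gxs0 := minimizer_grad_eq0 xs_min.
have lby := lb y xs; have coco := cocoercive y xs.
rewrite Gxs0 subr0 dotv0l subr0 in coco.
rewrite -[xs - y]opprB sqnormN dotvNr (dotvC (G y)) in lby.
rewrite (sqnormB (y - xs)) sqnormZ dotvZr.
set X := sqnorm (y - xs) in lby *; set g := dotv (y - xs) (G y) in lby *.
set F := phi y - phi xs in coco *.
have F_ge0 : 0 <= F by rewrite subr_ge0 xs_min.
have {}lby : F + mu / 2 * X <= g by rewrite /F; lra.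
have := ler_wpM2l gamma_ge0 lby; have := ler_wpM2l (sqr_ge0 gamma) coco.
have -> : (1 - gamma * mu) * X - 2 * gamma * (1 - gamma * L) * F
  = X - 2 * (gamma * (F + mu / 2 * X)) + gamma ^+ 2 * (2 * L * F) by field.
lra.
Qed.

End SmoothConvex.

End QuadraticBounds.

#[local] Hint Resolve measurableT : core.

Section Compressor.
Variables (R : realType) (d : nat) (dXi : measure_display) (Xi : measurableType dXi).
Variables (P : probability Xi R) (Cc : Xi -> 'rV[R]_d -> 'rV[R]_d) (om : R).
Hypothesis hC : in_B P Cc om.
Variable D : 'rV[R]_d.
Local Notation err z := (Cc z D - D).

Let P_setT : (P : {measure set Xi -> \bar R}) setT = 1%E.
Proof. exact: probability_setT. Qed.

Let err_coordE j :
  (fun z => ((err z) ord0 j)%:E) = (fun z => (Cc z D ord0 j)%:E - (D ord0 j)%:E)%E.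
Proof. by apply/funext => z; rewrite !mxE EFinB. Qed.

Lemma integrable_compress_err j :
  P.-integrable setT (fun z => ((err z) ord0 j)%:E).
Proof.
rewrite err_coordE; apply: integrableB => //; first exact: ((hC D).1 j).1.
exact: finite_measure_integrable_cst.
Qed.

Lemma integral_compress_err j : (\int[P]_z ((err z) ord0 j)%:E = 0)%E.
Proof.
rewrite err_coordE integralB //; last exact: finite_measure_integrable_cst.
  by rewrite ((hC D).1 j).2 integral_cst // P_setT mule1 subee.
exact: ((hC D).1 j).1.
Qed.

Let dotv_errE q :
  (fun z => (dotv q (err z))%:E) =
  (fun z => \sum_(j < d) ((q ord0 j)%:E * ((err z) ord0 j)%:E))%E.
Proof.
by apply/funext => z; rewrite /dotv -sumEFin; apply: eq_bigr => j _; rewrite EFinM.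
Qed.

Lemma integrable_dotv_compress_err q :
  P.-integrable setT (fun z => (dotv q (err z))%:E).
Proof.
rewrite dotv_errE; apply: integrable_sum => // j _.
exact/integrableZl/integrable_compress_err.
Qed.

Lemma integral_dotv_compress_err q : (\int[P]_z (dotv q (err z))%:E = 0)%E.
Proof.
rewrite dotv_errE integral_sum //; last first.
  by move=> j; exact/integrableZl/integrable_compress_err.
by apply: big1 => j _; rewrite integralZl ?integral_compress_err ?mule0 //;
  exact: integrable_compress_err.
Qed.

Lemma integral_sqnorm_compress_err_le :
  (\int[P]_z (sqnorm (err z))%:E <= (om * sqnorm D)%:E)%E.
Proof.
by under eq_integral do rewrite -enorm_sqr; rewrite -enorm_sqr; exact: (hC D).2.
Qed.

Lemma integrable_sqnorm_compress_err :
  P.-integrable setT (fun z => (sqnorm (err z))%:E).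
Proof.
apply/integrableP; split.
  apply/measurable_EFinP; apply: measurable_sum => j.
  by apply: measurable_funM; apply/measurable_EFinP;
     exact: measurable_int (integrable_compress_err j).
under eq_integral do rewrite gee0_abs ?lee_fin ?sqnorm_ge0 //.
exact: le_lt_trans integral_sqnorm_compress_err_le (ltry _).
Qed.

Lemma integral_quadratic_compress_err_le A q k : 0 <= k ->
  (\int[P]_z (A + dotv q (err z) + k * sqnorm (err z))%:E
    <= (A + k * (om * sqnorm D))%:E)%E.
Proof.
move=> k_ge0; under eq_integral do rewrite !EFinD EFinM.
have iA : P.-integrable setT (fun _ => A%:E) by exact: finite_measure_integrable_cst.
have iq := integrable_dotv_compress_err q.
have ik : P.-integrable setT (fun z => (k%:E * (sqnorm (err z))%:E)%E).
  by apply: integrableZl => //; exact: integrable_sqnorm_compress_err.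
rewrite integralD //; last exact: integrableD.
rewrite integralD // integral_cst // P_setT mule1 integral_dotv_compress_err adde0.
rewrite integralZl //; last exact: integrable_sqnorm_compress_err.
rewrite EFinD EFinM; apply/leeD2l/lee_wpmul2l; first by rewrite lee_fin.
exact: integral_sqnorm_compress_err_le.
Qed.

Lemma integral_compressed_sqnorms_le (p w : 'rV[R]_d) (s e c b K : R) :
  0 <= s -> 0 <= e ->
  (\int[P]_z (s * sqnorm (p - c *: Cc z D) + e * sqnorm (w + b *: Cc z D) + K)%:E
   <= (s * sqnorm (p - c *: D) + e * sqnorm (w + b *: D) + K
       + (s * c ^+ 2 + e * b ^+ 2) * om * sqnorm D)%:E)%E.
Proof.
move=> s_ge0 e_ge0.
set A := s * sqnorm (p - c *: D) + e * sqnorm (w + b *: D) + K.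
set q := (- 2 * s * c) *: (p - c *: D) + (2 * e * b) *: (w + b *: D).
set k := s * c ^+ 2 + e * b ^+ 2.
have k_ge0 : 0 <= k by rewrite addr_ge0 // mulr_ge0 // sqr_ge0.
have expand (u : 'rV[R]_d) :
    s * sqnorm (p - c *: (D + u)) + e * sqnorm (w + b *: (D + u)) + K
    = A + dotv q u + k * sqnorm u.
  rewrite !scalerDr opprD !addrA /A /q /k.
  move: (p - c *: D) (w + b *: D) => p' w'.
  rewrite sqnormB sqnormD !sqnormZ !dotvZr dotvDl !dotvZl; ring.
under eq_integral => z _ do rewrite -[Cc z D](subrKC D) expand.
by rewrite -mulrA; exact: integral_quadratic_compress_err_le.
Qed.

End Compressor.


(* Unlike [ge0_le_integral], no measurability is required: the integrands of
   [iexp] are not known to be measurable. *)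
Lemma ge0_le_integral_nonmeasurable (R : realType) dT (T : measurableType dT)
    (mu : {measure set T -> \bar R}) (f g : T -> \bar R) :
  (forall x, (0 <= f x)%E) -> (forall x, (f x <= g x)%E) ->
  (\int[mu]_x f x <= \int[mu]_x g x)%E.
Proof.
move=> f_ge0 le_fg.
rewrite !ge0_integralTE // => [|x]; last exact: le_trans (f_ge0 x) (le_fg x).
apply: ereal_sup_le => _ [h hf <-]; exists h => // x.
exact: le_trans (hf x) (le_fg x).
Qed.

Section IteratedExpectation.
Variables (R : realType) (n : nat) (dXi : measure_display) (Xi : measurableType dXi).
Variable P : nat -> 'I_n -> probability Xi R.
Implicit Types (l : seq (nat * 'I_n)) (F G : (nat -> 'I_n -> Xi) -> \bar R).

Lemma iexp_ge0 l F xi : (forall xi, (0 <= F xi)%E) -> (0 <= iexp P l F xi)%E.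
Proof.
move=> F_ge0; elim: l xi => [|[k i] l IHl] xi /=; first exact: F_ge0.
by apply: integral_ge0 => z _; exact: IHl.
Qed.

Lemma le_iexp l F G xi : (forall xi, (0 <= F xi)%E) ->
  (forall xi, (F xi <= G xi)%E) -> (iexp P l F xi <= iexp P l G xi)%E.
Proof.
move=> F_ge0 le_FG; elim: l xi => [|[k i] l IHl] xi /=; first exact: le_FG.
by apply: ge0_le_integral_nonmeasurable => z; [exact: iexp_ge0 | exact: IHl].
Qed.

Lemma iexp_cat l1 l2 F xi : iexp P (l1 ++ l2) F xi = iexp P l1 (iexp P l2 F) xi.
Proof.
elim: l1 xi => [|[k i] l IHl] xi //=.
by apply: eq_integral => z _; rewrite IHl.
Qed.

Lemma iexp0 l xi : iexp P l (fun _ => 0%E) xi = 0%E.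
Proof.
elim: l xi => [|[k i] l IHl] xi //=.
by under eq_integral do rewrite IHl; rewrite integral0.
Qed.

(* integrating over the draws of iteration [k] only modifies row [k] of [xi] *)
Lemma eq_iexp_row k (s : seq 'I_n) F G xi :
  (forall xi', (forall k0, k0 != k -> xi' k0 = xi k0) -> F xi' = G xi') ->
  iexp P [seq (k, i) | i <- s] F xi = iexp P [seq (k, i) | i <- s] G xi.
Proof.
elim: s xi => [|i s IHs] xi eq_FG /=; first exact: eq_FG.
apply: eq_integral => z _; apply: IHs => xi' xi'E; apply: eq_FG => k0 k0k.
by rewrite xi'E //=; apply/funext => i0; rewrite (negbTE k0k).
Qed.

End IteratedExpectation.

Section CompressionRound.
Variables (R : realType) (n d : nat) (dXi : measure_display) (Xi : measurableType dXi).
Variable P : nat -> 'I_n -> probability Xi R.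
Local Notation V := 'rV[R]_d.
Variables (C : nat -> 'I_n -> Xi -> V -> V) (om : 'I_n -> R).
Hypothesis hC : forall k i, in_B (P k i) (C k i) (om i).
Hypothesis om_ge0 : forall i, 0 <= om i.
Variables (k : nat) (a : V) (b D : 'I_n -> V) (s c : R) (e be : 'I_n -> R).
Hypotheses (s_ge0 : 0 <= s) (e_ge0 : forall i, 0 <= e i).

Definition round_cost (Y : 'I_n -> V) :=
  s * sqnorm (a - c *: \sum_(i < n) Y i) + \sum_(i < n) e i * sqnorm (b i + be i *: Y i).

Definition round_variance i := (s * c ^+ 2 + e i * be i ^+ 2) * om i * sqnorm (D i).

(* the compressors of the nodes in [S] have been integrated out *)
Let partial_cost (S : seq 'I_n) xi :=
  round_cost (fun i => if i \in S then D i else C k i (xi k i) (D i))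
  + \sum_(i < n | i \in S) round_variance i.

Let round_cost_ge0 Y : 0 <= round_cost Y.
Proof.
rewrite addr_ge0 ?mulr_ge0 ?sqnorm_ge0 // sumr_ge0 // => i _.
by rewrite mulr_ge0 ?sqnorm_ge0.
Qed.

Let partial_cost_ge0 S xi : 0 <= partial_cost S xi.
Proof.
rewrite addr_ge0 // sumr_ge0 // => i _.
by rewrite !mulr_ge0 ?sqnorm_ge0 // addr_ge0 // mulr_ge0 // sqr_ge0.
Qed.

Let round_cost_update (Y : 'I_n -> V) i v :
  round_cost (fun j => if j == i then v else Y j) =
  s * sqnorm ((a - c *: \sum_(j < n | j != i) Y j) - c *: v)
  + e i * sqnorm (b i + be i *: v)
  + \sum_(j < n | j != i) e j * sqnorm (b j + be j *: Y j).
Proof.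
rewrite /round_cost (bigD1 i) //= eqxx (bigD1 i (P := xpredT)) //= eqxx.
rewrite (eq_bigr Y); last by move=> j /negbTE ->.
rewrite (eq_bigr (fun j => e j * sqnorm (b j + be j *: Y j))) => [|j /negbTE -> //].
by rewrite scalerDr opprD addrA (addrAC a) addrA.
Qed.

Let iexp_partial_round (l S : seq 'I_n) xi : uniq l -> {in l, forall i, i \notin S} ->
  (iexp P [seq (k, i) | i <- l] (fun xi => (partial_cost S xi)%:E) xi
   <= (partial_cost (S ++ l) xi)%:E)%E.
Proof.
elim: l S xi => [|i l IHl] S xi /=; first by rewrite cats0.
move=> /andP[il ul] lS.
have iS : i \notin S by apply: lS; rewrite mem_head.
pose xi_z z := fun k0 i0 => if (k0 == k) && (i0 == i) then z else xi k0 i0.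
apply: le_trans (_ : \int[P k i]_z (partial_cost (S ++ l) (xi_z z))%:E <= _)%E.
  apply: ge0_le_integral_nonmeasurable => z.
    by apply: iexp_ge0 => xi'; rewrite lee_fin partial_cost_ge0.
  by apply: IHl => // j jl; apply: lS; rewrite in_cons jl orbT.
set Y := fun j => if j \in S ++ i :: l then D j else C k j (xi k j) (D j).
have Y_zE z : (fun j => if j \in S ++ l then D j else C k j (xi_z z k j) (D j))
    = (fun j => if j == i then C k i z (D i) else Y j).
  apply/funext => j; rewrite /Y /xi_z !mem_cat in_cons eqxx /=.
  by case: eqVneq => [->|] /=; rewrite ?(negbTE iS) ?(negbTE il).
have YE : Y = (fun j => if j == i then D i else Y j).
  by apply/funext => j; case: eqVneq => // ->; rewrite /Y mem_cat mem_head orbT.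
have varE : \sum_(j < n | j \in S ++ i :: l) round_variance j
    = round_variance i + \sum_(j < n | j \in S ++ l) round_variance j.
  rewrite (bigD1 i) /=; last by rewrite mem_cat mem_head orbT.
  congr (_ + _); apply: eq_bigl => j; rewrite !mem_cat in_cons.
  by case: eqVneq => [->|] /=; rewrite ?andbT ?(negbTE iS) ?(negbTE il).
rewrite /partial_cost -/Y YE varE round_cost_update.
under eq_integral do rewrite Y_zE round_cost_update -addrA.
apply: le_trans (integral_compressed_sqnorms_le (hC k i) _ _ _ _ _ _ s_ge0 (e_ge0 i)) _.
by rewrite lee_fin /round_variance; lra.
Qed.

Lemma iexp_compression_round xi :
  (iexp P [seq (k, i) | i <- enum 'I_n]
      (fun xi => (round_cost (fun i => C k i (xi k i) (D i)))%:E) xi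
   <= (round_cost D + \sum_(i < n) round_variance i)%:E)%E.
Proof.
have := @iexp_partial_round (enum 'I_n) [::] xi (enum_uniq _)
  (fun i _ => negbT (in_nil i)).
rewrite /partial_cost /= big_pred0 //.
set F := (fun xi0 : nat -> 'I_n -> Xi => _); have -> : F = fun xi0 =>
    (round_cost (fun i => C k i (xi0 k i) (D i)))%:E.
  by apply/funext => xi0; rewrite /F addr0.
have -> : (fun i => if i \in enum 'I_n then D i else C k i (xi k i) (D i)) = D.
  by apply/funext => i; rewrite mem_enum.
by rewrite (eq_bigl xpredT) // => i; rewrite mem_enum.
Qed.

End CompressionRound.

Lemma diana_prefix_dependence (R : realType) n d dXi (Xi : measurableType dXi)
    (C : nat -> 'I_n -> Xi -> 'rV[R]_d -> 'rV[R]_d) gradf alpha beta xloc gamma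
    x0 h0 K (xi xi' : nat -> 'I_n -> Xi) :
  (forall k, (k < K)%N -> xi k = xi' k) ->
  diana C gradf alpha beta xloc gamma x0 h0 xi K
  = diana C gradf alpha beta xloc gamma x0 h0 xi' K.
Proof.
elim: K => [|K IHK] // eq_xi /=.
by rewrite IHK ?eq_xi // => k /ltnW; exact: eq_xi.
Qed.

Section DianaLyapunov.
Variables (R : realType) (n d : nat).
Local Notation V := 'rV[R]_d.
Variables (f : 'I_n -> V -> R) (gradf : 'I_n -> V -> V) (L mu : 'I_n -> R).
Variables (alpha : 'I_n -> R) (xloc : 'I_n -> V) (xstar : V).
Variables (omega beta : 'I_n -> R) (gamma : R).

Hypothesis n_gt0 : (0 < n)%N.
Hypothesis f_lower : forall i, quad_lower_bound (f i) (gradf i) (mu i).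
Hypothesis f_upper : forall i, quad_upper_bound (f i) (gradf i) (L i).
Hypotheses (mu_ge0 : forall i, 0 <= mu i) (L_gt0 : forall i, 0 < L i).
Hypothesis alpha_gt0 : forall i, 0 < alpha i.
Hypothesis omega_ge0 : forall i, 0 <= omega i.
Hypothesis beta_bounds : forall i, 0 < beta i <= (omega i + 1)^-1.
Hypothesis gamma_gt0 : 0 < gamma.

(* [local_obj i] is [f_i o T_i], [avg_obj] is [ftilde] and [lyapunov (x^k, h^k)]
   is [D^k] of the statement. *)
Definition local_obj i x := f i (alpha i *: x + (1 - alpha i) *: xloc i).
Definition local_grad i x := alpha i *: gradf i (alpha i *: x + (1 - alpha i) *: xloc i).
Definition avg_obj x := n%:R^-1 * \sum_(i < n) local_obj i x.
Definition avg_grad x := n%:R^-1 *: \sum_(i < n) local_grad i x.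
Definition L_avg := n%:R^-1 * \sum_(i < n) alpha i ^+ 2 * L i.
Definition mu_avg := n%:R^-1 * \sum_(i < n) alpha i ^+ 2 * mu i.
Definition beta_min := \big[Order.min/1]_(i < n) beta i.
Definition max_L_omega := \big[Order.max/0]_(i < n) (L i * alpha i ^+ 2 * omega i).
Definition max_beta_L_omega :=
  \big[Order.max/0]_(i < n) (beta i * omega i * L i * alpha i ^+ 2).
Definition step_bound :=
  L_avg + 2 * max_L_omega / n%:R + 4 * max_beta_L_omega / (n%:R * beta_min).
Definition lyap_weight := 4 / (n%:R * beta_min) * gamma ^+ 2 * n%:R^-1.
Definition lyapunov (st : V * ('I_n -> V)) := sqnorm (st.1 - xstar)
  + lyap_weight * \sum_(i < n) omega i * sqnorm (st.2 i - local_grad i xstar).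
Definition rate := Order.max (1 - gamma * mu_avg) (1 - beta_min / 2).
Definition bregman i x :=
  local_obj i x - local_obj i xstar - dotv (local_grad i xstar) (x - xstar).

Hypothesis xstar_min : is_minimizer avg_obj xstar.
Hypothesis gamma_le : gamma <= step_bound^-1.

Let n_pos : 0 < n%:R :> R. Proof. by rewrite ltr0n. Qed.

Lemma local_obj_lower i :
  quad_lower_bound (local_obj i) (local_grad i) (alpha i ^+ 2 * mu i).
Proof. exact: quad_lower_bound_comp_affine. Qed.

Lemma local_obj_upper i :
  quad_upper_bound (local_obj i) (local_grad i) (alpha i ^+ 2 * L i).
Proof. exact: quad_upper_bound_comp_affine. Qed.

Lemma avg_obj_lower : quad_lower_bound avg_obj avg_grad mu_avg.
Proof. exact/quad_lower_bound_avg/local_obj_lower. Qed.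

Lemma avg_obj_upper : quad_upper_bound avg_obj avg_grad L_avg.
Proof. exact/quad_upper_bound_avg/local_obj_upper. Qed.

Let alpha2_mu_ge0 i : 0 <= alpha i ^+ 2 * mu i.
Proof. by rewrite mulr_ge0 ?sqr_ge0. Qed.

Let alpha2_L_gt0 i : 0 < alpha i ^+ 2 * L i.
Proof. by rewrite mulr_gt0 ?exprn_gt0. Qed.

Lemma mu_avg_ge0 : 0 <= mu_avg.
Proof. by rewrite mulr_ge0 ?invr_ge0 ?sumr_ge0. Qed.

Lemma L_avg_gt0 : 0 < L_avg.
Proof.
rewrite mulr_gt0 ?invr_gt0 // (bigD1 (Ordinal n_gt0)) //=.
by rewrite ltr_pwDl // sumr_ge0 // => i _; rewrite ltW.
Qed.

Lemma avg_grad_xstar : avg_grad xstar = 0.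
Proof. exact: (@minimizer_grad_eq0 _ _ _ _ _ L_avg_gt0 avg_obj_upper _ xstar_min). Qed.

Lemma bregman_ge0 i x : 0 <= bregman i x.
Proof.
have := quad_lower_boundW (alpha2_mu_ge0 i) (local_obj_lower i) xstar x.
by rewrite mul0r mul0r addr0 /bregman subr_ge0 lerBrDl addrC.
Qed.

Lemma local_grad_cocoercive i x :
  sqnorm (local_grad i x - local_grad i xstar) <= 2 * (alpha i ^+ 2 * L i) * bregman i x.
Proof.
exact: cocoercive (alpha2_mu_ge0 i) (alpha2_L_gt0 i) (local_obj_lower i)
  (local_obj_upper i) _ _.
Qed.

Lemma sum_bregman x : \sum_(i < n) bregman i x = n%:R * (avg_obj x - avg_obj xstar).
Proof.
rewrite /bregman !big_split /= !sumrN -dotv_suml.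
have -> : \sum_(i < n) local_grad i xstar = n%:R *: avg_grad xstar.
  by rewrite scalerA mulfV ?gt_eqF // scale1r.
rewrite avg_grad_xstar scaler0 dotv0l subr0 /avg_obj mulrBr !mulrA.
by rewrite mulfV ?gt_eqF // !mul1r.
Qed.

Lemma avg_gradient_step x :
  sqnorm (x - xstar - gamma *: avg_grad x)
    <= (1 - gamma * mu_avg) * sqnorm (x - xstar)
       - 2 * gamma * (1 - gamma * L_avg) * (avg_obj x - avg_obj xstar).
Proof.
exact: gradient_step_sqnorm_le mu_avg_ge0 L_avg_gt0 avg_obj_lower avg_obj_upper
  _ _ _ xstar_min (ltW gamma_gt0).
Qed.

Let beta_min_gt0 : 0 < beta_min.
Proof. by apply/bigmin_gtP; split => // i _; case/andP: (beta_bounds i). Qed.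

Let beta_min_le i : beta_min <= beta i.
Proof. exact: bigmin_le. Qed.

Let beta_min_le1 : beta_min <= 1.
Proof. exact: bigmin_le_id. Qed.

Let lyap_weight_ge0 : 0 <= lyap_weight.
Proof. by rewrite !mulr_ge0 ?invr_ge0 ?sqr_ge0 ?ler0n // ltW // mulr_gt0. Qed.

Let max_L_omega_ge0 : 0 <= max_L_omega.
Proof. exact: bigmax_ge_id. Qed.

Let max_beta_L_omega_ge0 : 0 <= max_beta_L_omega.
Proof. exact: bigmax_ge_id. Qed.

Lemma node_step_bound i x (h : V) :
  lyap_weight * omega i
      * (sqnorm (h - local_grad i xstar + beta i *: (local_grad i x - h))
         + beta i ^+ 2 * omega i * sqnorm (local_grad i x - h))
    + (gamma / n%:R) ^+ 2 * omega i * sqnorm (local_grad i x - h)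
  <= (lyap_weight * (1 - beta_min) + 2 * (gamma / n%:R) ^+ 2)
       * (omega i * sqnorm (h - local_grad i xstar))
     + (2 * lyap_weight * max_beta_L_omega + 4 * (gamma / n%:R) ^+ 2 * max_L_omega)
       * bregman i x.
Proof.
set u := h - local_grad i xstar; set delta := local_grad i x - h.
set w := local_grad i x - local_grad i xstar.
have deltaE : delta = w - u by rewrite /delta /w /u opprB addrA subrK.
have [beta_gt0 beta_le] := andP (beta_bounds i).
have B_ge0 := bregman_ge0 i x; have om_ge0 := omega_ge0 i.
have w_le := local_grad_cocoercive i x; rewrite -/w in w_le.
have w_max2 : beta i * omega i * sqnorm w <= 2 * max_beta_L_omega * bregman i x.
  have := ler_wpM2l (mulr_ge0 (ltW beta_gt0) om_ge0) w_le.
  have : beta i * omega i * L i * alpha i ^+ 2 <= max_beta_L_omega.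
    exact: le_bigmax.
  move/(ler_wpM2r B_ge0); lra.
have w_max1 : omega i * sqnorm w <= 2 * max_L_omega * bregman i x.
  have := ler_wpM2l om_ge0 w_le.
  have : L i * alpha i ^+ 2 * omega i <= max_L_omega by exact: le_bigmax.
  move/(ler_wpM2r B_ge0); lra.
have h_upd : sqnorm (u + beta i *: delta) + beta i ^+ 2 * omega i * sqnorm delta
    <= (1 - beta_min) * sqnorm u + beta i * sqnorm w.
  rewrite deltaE; apply: le_trans (sqnorm_averaging_contraction _ _ _ _ _) _ => //.
    exact: ltW.
  by rewrite lerD2r ler_wpM2r ?sqnorm_ge0 // lerD2l lerN2.
have := sqnormB_le w u; rewrite -deltaE => delta_le.
have := ler_wpM2l (mulr_ge0 lyap_weight_ge0 om_ge0) h_upd.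
have := ler_wpM2l (mulr_ge0 (sqr_ge0 (gamma / n%:R)) om_ge0) delta_le.
have := ler_wpM2l lyap_weight_ge0 w_max2.
have := ler_wpM2l (sqr_ge0 (gamma / n%:R)) w_max1.
lra.
Qed.

Lemma step_bound_gt0 : 0 < step_bound.
Proof.
rewrite /step_bound -addrA ltr_pwDl ?L_avg_gt0 // addr_ge0 // !mulr_ge0 //.
by rewrite invr_ge0 mulr_ge0 // ltW.
Qed.

Lemma lyapunov_ge0 st : 0 <= lyapunov st.
Proof.
rewrite addr_ge0 ?sqnorm_ge0 // mulr_ge0 // sumr_ge0 // => i _.
by rewrite mulr_ge0 ?sqnorm_ge0.
Qed.

Lemma rate_ge0 : 0 <= rate.
Proof. by rewrite le_max; apply/orP; right; have := beta_min_le1; lra. Qed.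

Lemma lyapunov_contraction x (h : 'I_n -> V) :
  sqnorm (x - xstar - gamma *: avg_grad x)
  + \sum_(i < n) (lyap_weight * omega i
        * (sqnorm (h i - local_grad i xstar + beta i *: (local_grad i x - h i))
           + beta i ^+ 2 * omega i * sqnorm (local_grad i x - h i))
      + (gamma / n%:R) ^+ 2 * omega i * sqnorm (local_grad i x - h i))
  <= rate * lyapunov (x, h).
Proof.
set X := sqnorm (x - xstar).
set S := \sum_(i < n) omega i * sqnorm (h i - local_grad i xstar).
set F := avg_obj x - avg_obj xstar.
have X_ge0 : 0 <= X by exact: sqnorm_ge0.
have S_ge0 : 0 <= S by rewrite sumr_ge0 // => i _; rewrite mulr_ge0 ?sqnorm_ge0.
have F_ge0 : 0 <= F by rewrite subr_ge0 xstar_min.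
have nodes := @ler_sum _ _ (index_enum 'I_n) xpredT _ _
  (fun i _ => node_step_bound i x (h i)).
rewrite [X in _ <= X]big_split /= -!mulr_sumr sum_bregman -/S -/F in nodes.
have weightE : lyap_weight * (1 - beta_min) + 2 * (gamma / n%:R) ^+ 2
    = lyap_weight * (1 - beta_min / 2).
  by rewrite /lyap_weight; field; rewrite !gt_eqF.
have FE : (2 * lyap_weight * max_beta_L_omega
      + 4 * (gamma / n%:R) ^+ 2 * max_L_omega) * n%:R
    = 2 * gamma * (1 - gamma * L_avg) - 2 * gamma * (1 - gamma * step_bound).
  by rewrite /lyap_weight /step_bound; field; rewrite !gt_eqF.
rewrite weightE in nodes.
have gK : gamma * step_bound <= 1 by rewrite -ler_pdivlMr ?step_bound_gt0 // mul1r.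
have rate1 : (1 - gamma * mu_avg) * X <= rate * X.
  by rewrite ler_wpM2r // /rate le_max lexx.
have rate2 : (1 - beta_min / 2) * (lyap_weight * S) <= rate * (lyap_weight * S).
  by rewrite ler_wpM2r ?(mulr_ge0 lyap_weight_ge0 S_ge0) // /rate le_max lexx orbT.
have FB : 0 <= 2 * gamma * (1 - gamma * step_bound) * F.
  by rewrite !mulr_ge0 ?subr_ge0 // ltW.
have cFE : (2 * lyap_weight * max_beta_L_omega + 4 * (gamma / n%:R) ^+ 2 * max_L_omega)
      * (n%:R * F)
    = 2 * gamma * (1 - gamma * L_avg) * F - 2 * gamma * (1 - gamma * step_bound) * F.
  by rewrite mulrA FE mulrBl.
have := avg_gradient_step x; rewrite -/X -/F.
rewrite /lyapunov /= -/X -/S [rate * _]mulrDr; lra.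
Qed.

Variables (dXi : measure_display) (Xi : measurableType dXi).
Variables (P : nat -> 'I_n -> probability Xi R) (C : nat -> 'I_n -> Xi -> V -> V).
Hypothesis hC : forall k i, in_B (P k i) (C k i) (omega i).
Variables (x0 : V) (h0 : 'I_n -> V).

Local Notation diana_state xi k := (diana C gradf alpha beta xloc gamma x0 h0 xi k).

Let center_step x (h Y : 'I_n -> V) :
  x - gamma *: (n%:R^-1 *: \sum_(i < n) (h i + Y i)) - xstar
  = x - xstar - (gamma / n%:R) *: \sum_(i < n) h i - (gamma / n%:R) *: \sum_(i < n) Y i.
Proof.
by rewrite scalerA big_split scalerDr opprD !addrA (addrAC (x - _)) (addrAC x).
Qed.

(* Given the draws before iteration [j], [c * lyapunov] after it is the
   [round_cost] of the compressed messages. *)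
Lemma expected_lyapunov_step j c xi : 0 <= c ->
  (iexp P [seq (j, i) | i <- enum 'I_n]
     (fun xi' => (c * lyapunov (diana_state xi' j.+1))%:E) xi
   <= (c * rate * lyapunov (diana_state xi j))%:E)%E.
Proof.
move=> c_ge0; set x := (diana_state xi j).1; set h := (diana_state xi j).2.
set a := x - xstar - (gamma / n%:R) *: \sum_(i < n) h i.
set b := fun i => h i - local_grad i xstar.
set e := fun i => c * (lyap_weight * omega i).
set delta := fun i => local_grad i x - h i.
have e_ge0 i : 0 <= e i by rewrite mulr_ge0 // mulr_ge0.
rewrite (@eq_iexp_row _ _ _ _ _ _ _ _
  (fun xi' => (round_cost a b c (gamma / n%:R) e beta
                 (fun i => C j i (xi' j i) (delta i)))%:E)); last first.
  move=> xi' xi'E; congr (_%:E); rewrite /=.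
  have -> : diana_state xi' j = diana_state xi j.
    by apply: diana_prefix_dependence => k kj; rewrite xi'E // ltn_eqF.
  rewrite -/x -/h /lyapunov /= center_step mulrDr; congr (_ + _).
  rewrite mulrA [c * lyap_weight * _]mulr_sumr; apply: eq_bigr => i _.
  by rewrite /e /b addrAC !mulrA.
apply: le_trans (iexp_compression_round hC omega_ge0 _ _ _ _ _ _ c_ge0 e_ge0 _) _.
rewrite lee_fin -mulrA; apply: le_trans (ler_wpM2l c_ge0 (lyapunov_contraction x h)).
rewrite le_eqVlt; apply/orP; left; apply/eqP.
rewrite /round_cost /round_variance [RHS]mulrDr -addrA -big_split /=.
rewrite [c * \sum_(i < n) _]mulr_sumr.
congr (_ + _); last by apply: eq_bigr => i _; rewrite /e /b /delta; ring.
congr (_ * sqnorm _); rewrite /a /avg_grad -addrA -opprD -scalerDr -big_split /=.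
by rewrite scalerA; under eq_bigr do rewrite /delta addrC subrK.
Qed.

Lemma expected_lyapunov_iter m j xi :
  (iexp P [seq (k, i) | k <- iota j m, i <- enum 'I_n]
     (fun xi' => (lyapunov (diana_state xi' (j + m)))%:E) xi
   <= (rate ^+ m * lyapunov (diana_state xi j))%:E)%E.
Proof.
elim: m j xi => [|m IHm] j xi; first by rewrite addn0 mul1r.
rewrite /= iexp_cat -addSnnS.
apply: (@le_trans _ _ (iexp P [seq (j, i) | i <- enum 'I_n]
  (fun xi' => (rate ^+ m * lyapunov (diana_state xi' j.+1))%:E) xi)).
  apply: le_iexp => [xi'|xi']; last exact: IHm.
  by apply: iexp_ge0 => xi''; rewrite lee_fin lyapunov_ge0.
by rewrite exprSr; apply: expected_lyapunov_step; rewrite exprn_ge0 ?rate_ge0.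
Qed.

End DianaLyapunov.

Unset Implicit Arguments. Set Strict Implicit. Set Printing Implicit Defensive.

Theorem theorem4 (R : realType) (n d : nat) (hn : (0 < n)%N)
  (f : 'I_n -> 'rV[R]_d -> R) (L mu : 'I_n -> R) (xloc : 'I_n -> 'rV[R]_d)
  (hsmooth : forall i, L_smooth (f i) (L i))
  (hmu : forall i, 0 < mu i)
  (hconv : forall i, strongly_convex (f i) (mu i))
  (hxloc : forall i, is_minimizer (f i) (xloc i))
  (alpha : 'I_n -> R) (halpha : forall i, 0 < alpha i < 1)
  (xstar : 'rV[R]_d)
  (hxstar : is_minimizer
     (fun x => n%:R^-1 * \sum_(i < n) f i (alpha i *: x + (1 - alpha i) *: xloc i))
     xstar)
  (omega beta : 'I_n -> R)
  (homega : forall i, 0 <= omega i)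
  (hbeta : forall i, 0 < beta i <= (omega i + 1)^-1)
  (dXi : measure_display) (Xi : measurableType dXi)
  (P : nat -> 'I_n -> probability Xi R)
  (C : nat -> 'I_n -> Xi -> 'rV[R]_d -> 'rV[R]_d)
  (hC : forall k i, in_B (P k i) (C k i) (omega i))
  (x0 : 'rV[R]_d) (h0 : 'I_n -> 'rV[R]_d) (gamma : R)
  (hgamma_pos : 0 < gamma)
  (hgamma : gamma <=
     (n%:R^-1 * \sum_(i < n) alpha i ^+ 2 * L i
      + 2 * \big[Order.max/0]_(i < n) (L i * alpha i ^+ 2 * omega i) / n%:R
      + 4 * \big[Order.max/0]_(i < n) (beta i * omega i * L i * alpha i ^+ 2)
          / (n%:R * \big[Order.min/1]_(i < n) beta i))^-1) :
  let st := diana C (fun i => grad (f i)) alpha beta xloc gamma x0 h0 in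
  let sigma2 k xi := n%:R^-1 * \sum_(i < n) omega i *
      enorm ((st xi k).2 i
             - alpha i *: grad (f i) (alpha i *: xstar + (1 - alpha i) *: xloc i)) ^+ 2 in
  let bmin := \big[Order.min/1]_(i < n) beta i in
  let D k xi := enorm ((st xi k).1 - xstar) ^+ 2
                + 4 / (n%:R * bmin) * gamma ^+ 2 * sigma2 k xi in
  let mualpha := n%:R^-1 * \sum_(i < n) alpha i ^+ 2 * mu i in
  forall k : nat,
    (expect_upto P k (fun xi => (D k xi)%:E)
     <= (Order.max ((1 - gamma * mualpha) ^+ k) ((1 - bmin / 2) ^+ k)
         * D 0%N (fun _ _ => point))%:E)%E.
Proof.
move=> st sigma2 bmin D mualpha k.
(* Only for [d > 0] do the quadratic bounds force [mu i <= L i], hence [0 < L i]. *)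
have [d0|d_gt0] := posnP d.
  subst d; have D0 j xi : D j xi = 0.
    rewrite /D /sigma2 enorm_sqr sqnorm_rV0 big1 ?mulr0 ?addr0 // => i _.
    by rewrite enorm_sqr sqnorm_rV0 mulr0.
  have -> : (fun xi => (D k xi)%:E) = (fun _ => 0%E) by apply/funext => xi; rewrite D0.
  by rewrite /expect_upto iexp0 D0 mulr0.
have f_lower i := strongly_convex_quad_lower (hconv i).
have f_upper i := L_smooth_quad_upper (hsmooth i).
have L_gt0 i : 0 < L i.
  exact: lt_le_trans (hmu i) (quad_bounds_le d_gt0 (f_lower i) (f_upper i)).
set V := lyapunov (fun i => grad (f i)) alpha xloc xstar omega beta gamma.
have DE j xi : D j xi = V (st xi j).
  rewrite /D /sigma2 /V /lyapunov /lyap_weight enorm_sqr -!mulrA.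
  congr (_ + _ * (_ * (_ * (_ * _)))); congr (_ * _).
  by apply: eq_bigr => i _; rewrite enorm_sqr.
have := expected_lyapunov_iter hn f_lower f_upper (fun i => ltW (hmu i)) L_gt0
  (fun i => proj1 (andP (halpha i))) homega hbeta hgamma_pos hxstar hgamma hC x0 h0 k 0
  (fun _ _ => point).
rewrite add0n /expect_upto DE (_ : (fun xi => (D k xi)%:E) = fun xi => (V (st xi k))%:E).
  move=> /le_trans; apply.
  by rewrite lee_fin ler_wpM2r ?lyapunov_ge0 //; exact: exprn_max_le.
by apply/funext => xi; rewrite DE.
Qed.
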